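(* For every $n\geq 1$, the Fibonacci-sum set-graph $G^F_{A^{(n)}}$ is Hamiltonian.
   Context: Let $\mathcal{F}=\{f_m\}_{m\ge 0}$ be the Fibonacci numbers, $f_0=0$, $f_1=1$, $f_m=f_{m-1}+f_{m-2}$. For $n\in\mathbb{N}$ let $A^{(n)}=\{1,2,\dots,n\}$. The Fibonacci-sum set-graph $G^F_{A^{(n)}}$ is the multigraph (loops and multiple edges allowed) whose vertices are in bijection with the nonempty subsets of $A^{(n)}$; between the vertices corresponding to distinct subsets $S,T$ there is one edge for each pair $(i',j')$ with $i'\in S$, $j'\in T$, $i'\neq j'$ and $i'+j'\in\mathcal{F}$, and at the vertex corresponding to $S$ there is one loop for each pair of distinct elements $i',j'\in S$ with $i'+j'\in\mathcal{F}$. *)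

From mathcomp Require Import all_boot.
Set Implicit Arguments. Unset Strict Implicit. Unset Printing Implicit Defensive.

Fixpoint fib (m : nat) : nat :=
  match m with
  | 0 => 0
  | 1 => 1
  | (m'.+1 as p).+1 => fib p + fib m'
  end.

(* k is a Fibonacci number.  Since fib m >= m - 1, any m with fib m = k
   satisfies m <= k + 1, so the bounded search is exactly "exists m, fib m = k". *)
Definition is_fib (k : nat) : bool := [exists m : 'I_(k.+2), fib m == k].

(* A^(n) = {1,...,n} is represented by 'I_n, the ordinal i standing for i+1.
   Vertices of the set-graph: nonempty subsets of A^(n). *)
Definition fvertex (n : nat) := {S : {set 'I_n} | S != set0}.

Definition fib_edges (n : nat) (S T : {set 'I_n}) : nat :=
  #|[set p : 'I_n * 'I_n | [&& p.1 \in S, p.2 \in T, p.1 != p.2 &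
                              is_fib (p.1.+1 + p.2.+1)]]|.

(* Number of loops at the vertex of S: unordered pairs of distinct elements of S
   with Fibonacci sum (irrelevant to Hamiltonicity, recorded for completeness). *)
Definition fib_loops (n : nat) (S : {set 'I_n}) : nat :=
  #|[set p : 'I_n * 'I_n | [&& p.1 \in S, p.2 \in S, p.1 < p.2 &
                              is_fib (p.1.+1 + p.2.+1)]]|.

Definition GF_mult (n : nat) (x y : fvertex n) : nat := fib_edges (val x) (val y).

(* A one-vertex graph is (trivially)
   Hamiltonian; a 2-vertex Hamiltonian cycle needs two parallel edges; for
   >= 3 vertices it is a cyclic ordering of all vertices with consecutive
   vertices adjacent. *)
Definition hamiltonian (T : finType) (em : T -> T -> nat) : Prop :=
  #|T| <= 1 \/
  (#|T| = 2 /\ forall x y : T, x != y -> 2 <= em x y) \/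
  (3 <= #|T| /\ exists s : seq T,
      [/\ uniq s, (forall x, x \in s) & cycle (fun x y => 0 < em x y) s]).

From mathcomp Require Import all_boot zify.

(* By induction on m we build a Hamiltonian path of the nonempty subsets of
   A^(m) running from {1} to A^(m).  For the new element v = m+1 pick q < v
   with q + v Fibonacci.  The sets containing v are v ∪ W and v ∪ {q} ∪ W for
   W ⊆ A^(m) ∖ {q}; listing these pairs one after the other, every step goes
   between a set containing q and one containing v, so they extend the old
   path (ending at A^(m) ∋ q), and ordering W = A^(m) ∖ {q} last makes the new
   path end at A^(m+1).  For n >= 2 the path closes up, as 1 + 2 = 3. *)

Set Implicit Arguments. Unset Strict Implicit. Unset Printing Implicit Defensive.

Lemma fibSS k : fib k.+2 = fib k.+1 + fib k.
Proof. by []. Qed.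

Lemma fib_gt0 k : 0 < fib k.+1.
Proof. by elim: k => [|k IHk] //; rewrite fibSS ltn_addr. Qed.

Lemma leq_fib k : k <= (fib k).+1.
Proof.
elim/ltn_ind: k => -[|[|k]] IHk //; rewrite fibSS.
have := IHk k.+1 (ltnSn _); case: k {IHk} => [|k] // IHk.
by have := fib_gt0 k; lia.
Qed.

Lemma is_fib_fib k : is_fib (fib k).
Proof.
by apply/existsP; exists (Ordinal (leq_fib k : k < (fib k).+2)).
Qed.

(* The least Fibonacci number F above v >= 2 satisfies F < 2v, so w := F - v works. *)
Lemma fib_partner v : 1 < v -> exists2 w, 0 < w < v & is_fib (v + w).
Proof.
move=> v_gt1; have fib_above : exists k, v < fib k by exists v.+2; have := leq_fib v.+2; lia.
case: (ex_minnP fib_above) => -[|[|[|[|k]]]] v_lt min_k; try by move: v_lt => /=; lia.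
have le_v : fib k.+3 <= v by rewrite leqNgt; apply/negP => /min_k; lia.
have := fib_gt0 k; rewrite !fibSS in v_lt le_v * => fk_gt0.
exists (fib k.+4 - v); first by rewrite !fibSS; lia.
by rewrite subnKC ?is_fib_fib // ltnW.
Qed.

Lemma subset_setU1 (T : finType) (a : T) (A B : {set T}) :
  a \notin A -> (A \subset a |: B) = (A \subset B).
Proof.
move=> aA; apply/idP/idP => [/subsetP AaB | /subset_trans -> //]; last exact: subsetU1.
apply/subsetP => x xA; have := AaB x xA; rewrite in_setU1.
by case: eqP => [xa|//]; rewrite -xa xA in aA.
Qed.

Lemma setU1_inj (T : finType) (a : T) (A B : {set T}) :
  a \notin A -> a \notin B -> a |: A = a |: B -> A = B.
Proof. by move=> aA aB AB; rewrite -(setU1K aA) AB setU1K. Qed.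

Lemma cycle_sig (T : finType) (P : pred T) (e : rel T) (s : seq T) :
  uniq s -> s =i P -> cycle e s ->
  exists t : seq {x | P x}, [/\ uniq t, forall x, x \in t & cycle (relpre val e) t].
Proof.
move=> s_uniq s_P s_cycle; pose t := pmap insub s : seq {x | P x}.
have val_t : map val t = s.
  rewrite pmap_filter; last exact: insubK.
  by apply/all_filterP/allP => x; rewrite s_P => Px; rewrite insubT.
exists t; split.
- by rewrite -(map_inj_uniq val_inj) val_t.
- by move=> x; rewrite -(mem_map val_inj) val_t s_P; exact: valP.
- by rewrite -cycle_map val_t.
Qed.

Lemma card_nonempty_sets (T : finType) : #|[pred A : {set T} | A != set0]| = (2 ^ #|T|).-1.
Proof. by rewrite cardC1 -cardsT -powersetT card_powerset cardsT. Qed.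

Section FibSetGraph.
Variable n : nat.

Definition fib_adj (S T : {set 'I_n}) : bool := 0 < fib_edges S T.

Lemma fib_adj_pair (S T : {set 'I_n}) (i j : 'I_n) :
  i \in S -> j \in T -> i != j -> is_fib (i.+1 + j.+1) -> fib_adj S T.
Proof. by move=> iS jT ij fij; apply/card_gt0P; exists (i, j); rewrite inE /= iS jT ij. Qed.

Definition seg (m : nat) : {set 'I_n} := [set i : 'I_n | i < m].

Section PairWalk.
Variables v q : 'I_n.
Hypotheses (q_neq_v : q != v) (fib_qv : is_fib (q.+1 + v.+1)).

Fixpoint pair_walk (L : seq {set 'I_n}) : seq {set 'I_n} :=
  if L is W :: L' then (v |: W) :: (v |: (q |: W)) :: pair_walk L' else [::].

Lemma path_pair_walk (X : {set 'I_n}) L : q \in X -> path fib_adj X (pair_walk L).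
Proof.
have fib_vq : is_fib (v.+1 + q.+1) by rewrite addnC.
elim: L X => [|W L IHL] X qX //=; apply/and3P; split.
- exact: fib_adj_pair qX (setU11 v W) q_neq_v fib_qv.
- by apply: (fib_adj_pair (setU11 v W) _ _ fib_vq); rewrite 1?eq_sym // !inE eqxx orbT.
- by apply: IHL; rewrite !inE eqxx orbT.
Qed.

Lemma last_pair_walk (X : {set 'I_n}) L W : last X (pair_walk (rcons L W)) = v |: (q |: W).
Proof. by elim: L X => [|W' L IHL] X //=; rewrite IHL. Qed.

Lemma mem_pair_walk S L :
  (S \in pair_walk L) = has (fun W => (S == v |: W) || (S == v |: (q |: W))) L.
Proof. by elim: L => [|W L IHL] //=; rewrite !inE IHL orbA. Qed.

Lemma uniq_pair_walk (L : seq {set 'I_n}) : uniq L ->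
  {in L, forall W : {set 'I_n}, (v \notin W) && (q \notin W)} -> uniq (pair_walk L).
Proof.
have q_notin (W : {set 'I_n}) : q \notin W -> q \notin v |: W by rewrite !inE negb_or q_neq_v.
have q_in (W : {set 'I_n}) : q \in v |: (q |: W) by rewrite !inE eqxx orbT.
have v_notin (W : {set 'I_n}) : v \notin W -> q \notin W -> v \notin q |: W.
  by move=> vW qW; rewrite !inE negb_or eq_sym q_neq_v.
elim: L => [|W L IHL] //= /andP[W_L L_uniq] avoid.
have /andP[vW qW] := avoid W (mem_head W L).
have {}avoid W' : W' \in L -> (v \notin W') && (q \notin W').
  by move=> W'L; apply: avoid; rewrite inE W'L orbT.
rewrite IHL // andbT !inE !mem_pair_walk negb_or -andbA; apply/and3P; split.
- by apply: contraNneq (q_notin W qW) => ->.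
- apply/hasPn => W' /[dup] W'L /avoid /andP[vW' qW']; rewrite negb_or; apply/andP; split.
    by apply: contraNneq W_L => /(setU1_inj vW vW') ->.
  by apply: contraNneq (q_notin W qW) => ->.
- apply/hasPn => W' /[dup] W'L /avoid /andP[vW' qW']; rewrite negb_or; apply/andP; split.
    by apply: contraNneq (q_notin W' qW') => <-.
  apply: contraNneq W_L => /(setU1_inj (v_notin W vW qW) (v_notin W' vW' qW')).
  by move/(setU1_inj qW qW') ->.
Qed.

Lemma mem_pair_walk_powerset (D : {set 'I_n}) (L : seq {set 'I_n}) S :
  L =i powerset D -> (S \in pair_walk L) = (v \in S) && (S \subset v |: (q |: D)).
Proof.
move=> L_D; rewrite mem_pair_walk; apply/hasP/andP => [[W] | [vS S_sub]].
  rewrite L_D powersetE => WD /orP[]/eqP->; rewrite setU11; split=> //; apply: setUS.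
    exact: subset_trans WD (subsetU1 q D).
  exact: setUS.
exists (S :\ v :\ q).
  rewrite L_D powersetE; apply/subsetP => x; rewrite !inE => /and3P[xq xv /(subsetP S_sub)].
  by rewrite !inE (negbTE xq) (negbTE xv).
have [qS | qS] := boolP (q \in S); apply/orP; [right | left]; apply/eqP.
  by rewrite setD1K ?setD1K // in_setD1 q_neq_v.
apply/setP => x; rewrite !inE; case: (x =P v) => [-> // | _] /=.
by case: (x =P q) => [-> | _]; rewrite ?(negbTE qS).
Qed.

End PairWalk.

Lemma segS m (m_lt_n : m < n) : seg m.+1 = Ordinal m_lt_n |: seg m.
Proof. by apply/setP => i; rewrite !inE ltnS leq_eqVlt -val_eqE. Qed.

Lemma seg_full : seg n = setT.
Proof. by apply/setP => i; rewrite !inE ltn_ord. Qed.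

Definition fib_ham_path (m : nat) (s : seq {set 'I_n}) : Prop :=
  [/\ uniq (seg 1 :: s), seg 1 :: s =i [pred S | (S != set0) && (S \subset seg m)],
      path fib_adj (seg 1) s & last (seg 1) s = seg m].

Lemma fib_ham_path1 : 0 < n -> fib_ham_path 1 [::].
Proof.
move=> n_gt0; split=> // S; rewrite !inE.
apply/eqP/andP => [-> | [/set0Pn[x xS] S_sub]].
  by split; [apply/set0Pn; exists (Ordinal n_gt0) | ]; rewrite ?inE.
apply/eqP; rewrite eqEsubset S_sub; apply/subsetP => y; rewrite inE => y0.
have := subsetP S_sub x xS; rewrite inE => x0.
by rewrite (_ : y = x) //; apply: val_inj => /=; lia.
Qed.

Lemma fib_ham_pathS m s (m_lt_n : m < n) : 0 < m -> fib_ham_path m s ->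
  exists s', fib_ham_path m.+1 s'.
Proof.
move=> m_gt0 [s_uniq s_mem s_path s_last]; pose v := Ordinal m_lt_n.
have [w /andP[w_gt0 w_le_m] fib_mw] := fib_partner (m_gt0 : 1 < m.+1).
have w_lt_n : w.-1 < n by lia.
pose q := Ordinal w_lt_n.
have q_seg : q \in seg m by rewrite inE /=; lia.
have q_neq_v : q != v by rewrite -val_eqE /=; lia.
have fib_qv : is_fib (q.+1 + v.+1) by rewrite /= prednK // addnC.
have v_seg : v \notin seg m by rewrite inE /= ltnn.
pose D := seg m :\ q; pose L := rcons (enum (powerset D :\ D)) D.
have L_D : L =i powerset D.
  move=> W; rewrite mem_rcons inE mem_enum in_setD1.
  by case: eqP => [->|]; rewrite ?powersetE ?subxx.
have L_uniq : uniq L by rewrite rcons_uniq mem_enum in_setD1 eqxx enum_uniq.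
have segSm : seg m.+1 = v |: (q |: D) by rewrite setD1K // (segS m_lt_n).
have walk_mem S : (S \in pair_walk v q L) = (v \in S) && (S \subset seg m.+1).
  by rewrite (mem_pair_walk_powerset q_neq_v _ L_D) segSm.
exists (s ++ pair_walk v q L); split.
- rewrite -cat_cons cat_uniq s_uniq uniq_pair_walk ?andbT //.
    apply/hasPn => S; rewrite walk_mem s_mem inE => /andP[vS _]; apply/nandP; right.
    by apply: contra v_seg => /subsetP; apply.
  move=> W; rewrite L_D powersetE => /subsetP WD.
  by apply/andP; split; apply/negP => /WD; rewrite in_setD1 ?eqxx // (negbTE v_seg) andbF.
- move=> S; rewrite -cat_cons mem_cat s_mem walk_mem !inE (segS m_lt_n).
  have [vS | vS] := boolP (v \in S); last by rewrite subset_setU1 // orbF.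
  have -> : S \subset seg m = false by apply: contraNF v_seg => /subsetP; apply.
  by have -> : S != set0 by apply/set0Pn; exists v.
- by rewrite cat_path s_path s_last path_pair_walk.
- by rewrite last_cat s_last last_pair_walk.
Qed.

Lemma exists_fib_ham_path m : 0 < m <= n -> exists s, fib_ham_path m s.
Proof.
case/andP; elim: m => [// | [_ _ n_gt0 | m IHm _ m_lt_n]].
  by exists [::]; apply: fib_ham_path1.
by have [s ham_s] := IHm isT (ltnW m_lt_n); apply: fib_ham_pathS ham_s.
Qed.

End FibSetGraph.

Theorem corollary2p3 (n : nat) : 1 <= n -> hamiltonian (@GF_mult n).
Proof.
move=> n_gt0; rewrite /hamiltonian card_sig card_nonempty_sets card_ord.
have [n_le1 | n_gt1] := leqP n 1.
  by left; rewrite (_ : n = 1) //; lia.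
right; right; split.
  by have := leq_pexp2l (isT : 0 < 2) n_gt1; lia.
have [s [s_uniq s_mem s_path s_last]] : exists s, @fib_ham_path n n s.
  by apply: exists_fib_ham_path; rewrite n_gt0 leqnn.
have s_V : seg n 1 :: s =i [pred S : {set 'I_n} | S != set0].
  by move=> S; rewrite s_mem !inE seg_full subsetT andbT.
have s_cycle : cycle (@fib_adj n) (seg n 1 :: s).
  rewrite /= rcons_path s_path s_last.
  apply: (fib_adj_pair (i := Ordinal n_gt1) (j := Ordinal n_gt0)); rewrite ?inE //.
  exact: (is_fib_fib 4).
by have [t] := cycle_sig s_uniq s_V s_cycle; exists t.
Qed.
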